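(* Let $(S,d)$ be a finite metric space partitioned into two disjoint groups $S=S_1\cup S_2$, let $k_1,k_2$ be nonnegative integers with $k=k_1+k_2$, and let $r^*$ be the optimal radius of the fair $k$-center problem. For $l\in\{1,2\}$ let $\Gamma_l\subseteq S_l$ be a $2r^*$-independent center set of $S_l$, with $|\Gamma_1|>k_1$ and $|\Gamma_2|>k_2$. Run Algorithm A (described in the context). For the $j$-th iteration of its while-loop, let $C^j$ and $\Gamma^j_l$ ($l=1,2$) denote the values of $C$ and of the current sets $\Gamma_l$ in that iteration. Then for every such $j$ and each $l\in\{1,2\}$: (1) $|\Gamma^j_l|\le k-|C^j|$; (2) $|C^j|\le k$; (3) $|C^j\cap S_l|\le k_l$.
   Context: Fair $k$-center: $C\subseteq S$ is feasible if $|C\cap S_l|\le k_l$ for each $l$; cost $\max_{s\in S}d(s,C)$, $d(s,C)=\min_{c\in C}d(s,c)$, $d(s,\emptyset)=\infty$; $r^*$ is the minimum cost over feasible $C$. For $T\subseteq S$, $\Gamma\subseteq T$ is a $\lambda$-independent center set of $T$ if distinct points of $\Gamma$ are at distance $>\lambda$ and every point of $T$ is within $\lambda$ of some point of $\Gamma$. Algorithm A (input $\Gamma_1,\Gamma_2$). Phase 1: $C\leftarrow\emptyset$; build the bipartite graph $G$ on vertex set $\Gamma_1\cup\Gamma_2$ where $p\in\Gamma_1$, $q\in\Gamma_2$ are adjacent iff $d(p,q)\le 3r^*$; for each degree-$0$ vertex $i$, if $d(C,i)>2r^*$ add $i$ to $C$; remove all degree-$0$ vertices from $G$ (throughout, the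 current $\Gamma_l$ means the vertices of $G$ that lie in the original $\Gamma_l$). Phase 2: while $|C|\le k$ and $G$ is nonempty: if $G$ has no vertex of degree $1$, pick an arbitrary edge, let $p$ be one of its endpoints (arbitrary) and $q$ the other, add $p$ to $C$ and delete $p$ and $q$ from $G$ (and from the current $\Gamma$ sets containing them); otherwise, pick a vertex $i$ of $G$ maximizing $|N_1(i)|$, where $N_1(i)$ is the set of degree-$1$ neighbours of $i$ in $G$, add $i$ to $C$ and delete $i$ and $N_1(i)$ from $G$ (and from the current $\Gamma$ sets). Then, if some $l\in\{1,2\}$ satisfies $|C\cap S_l|+|\Gamma_l|\le k_l$ (current $\Gamma_l$), set $C\leftarrow C\cup\Gamma_l$, let $\Gamma'_{3-l}=\{p\in\Gamma_{3-l}: d(p,C)>3r^*\}$ (current $\Gamma_{3-l}$), and return $C\cup\Gamma'_{3-l}$. If the loop ends without returning, output $C$. *)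

From mathcomp Require Import all_boot all_order all_algebra.
Set Implicit Arguments. Unset Strict Implicit. Unset Printing Implicit Defensive.
Import Order.TTheory GRing.Theory Num.Theory.
Local Open Scope ring_scope.

Section FairKCenter.
Variables (R : realFieldType) (T : finType) (d : T -> T -> R).

(* (T,d) is a (finite) metric space; the whole type T plays the role of S. *)
Definition metric : Prop :=
  [/\ forall x, d x x = 0,
      forall x y, d x y = 0 -> x = y,
      forall x y, d x y = d y x,
      forall x y, 0 <= d x y &
      forall x y z, d x z <= d x y + d y z].

Definition covers (C : {set T}) (r : R) : Prop :=
  forall s : T, exists2 c, c \in C & d s c <= r.

Definition fair_feasible (S1 S2 : {set T}) (k1 k2 : nat) (C : {set T}) : Prop :=
  (#|C :&: S1| <= k1)%N /\ (#|C :&: S2| <= k2)%N.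

Definition optimal_radius S1 S2 k1 k2 (r : R) : Prop :=
  (exists2 C, fair_feasible S1 S2 k1 k2 C & covers C r) /\
  (forall C r', fair_feasible S1 S2 k1 k2 C -> covers C r' -> r <= r').

Definition indep_center_set (lam : R) (A G : {set T}) : Prop :=
  [/\ G \subset A,
      {in G &, forall x y, x != y -> lam < d x y} &
      forall t, t \in A -> exists2 g, g \in G & d t g <= lam].

Variables (G1 G2 : {set T}) (r : R).

Definition adj (V : {set T}) (x y : T) : bool :=
  [&& x \in V, y \in V,
      (x \in G1) && (y \in G2) || (x \in G2) && (y \in G1) &
      d x y <= 3%:R * r].

Definition nbhd (V : {set T}) (x : T) : {set T} := [set y | adj V x y].
Definition deg (V : {set T}) (x : T) : nat := #|nbhd V x|.
Definition N1 (V : {set T}) (i : T) : {set T} :=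
  [set y in nbhd V i | deg V y == 1%N].

Definition V0 : {set T} := G1 :|: G2.
Definition isolated0 : {set T} := [set i in V0 | deg V0 i == 0%N].

Definition far (C : {set T}) (i : T) : bool := [forall c in C, 2%:R * r < d c i].

(* Phase 1, processing the degree-0 vertices in the order given by s. *)
Definition phase1_C (s : seq T) : {set T} :=
  foldl (fun C i => if far C i then i |: C else C) set0 s.
Definition phase1_V : {set T} := V0 :\: isolated0.

(* A state is (C, V) with V the vertex set of the current graph G;
   the current Gamma_l is V :&: G_l. *)
Definition guard (k : nat) (C V : {set T}) : bool := (#|C| <= k)%N && (V != set0).

(* One body step of the while-loop (before the return test), with all the
   arbitrary choices left nondeterministic. *)
Inductive step (C V : {set T}) : {set T} -> {set T} -> Prop :=
| step_edge p q :
    (forall v, v \in V -> deg V v != 1%N) -> adj V p q ->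
    step C V (p |: C) (V :\ p :\ q)
| step_deg1 i :
    (exists2 v, v \in V & deg V v == 1%N) -> i \in V ->
    (forall j, j \in V -> #|N1 V j| <= #|N1 V i|)%N ->
    step C V (i |: C) (V :\: (i |: N1 V i)).

Definition returns (S1 S2 : {set T}) (k1 k2 : nat) (C V : {set T}) : Prop :=
  (#|C :&: S1| + #|V :&: G1| <= k1)%N \/ (#|C :&: S2| + #|V :&: G2| <= k2)%N.

(* States (C,V) occurring in the loop, starting from the state (C0,V1) after Phase 1:
   the state at the start of each iteration, and the state after each loop body
   that did not return. *)
Inductive reachable (S1 S2 : {set T}) (k1 k2 : nat) (C0 V1 : {set T})
  : {set T} -> {set T} -> Prop :=
| reach0 : reachable S1 S2 k1 k2 C0 V1 C0 V1
| reachS C V C' V' :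
    reachable S1 S2 k1 k2 C0 V1 C V -> guard (k1 + k2) C V ->
    step C V C' V' -> ~ returns S1 S2 k1 k2 C' V' ->
    reachable S1 S2 k1 k2 C0 V1 C' V'.

End FairKCenter.

From mathcomp Require Import all_boot all_order all_algebra.
From mathcomp Require Import zify lra.
Set Implicit Arguments. Unset Strict Implicit. Unset Printing Implicit Defensive.
Import Order.TTheory GRing.Theory Num.Theory.
Local Open Scope ring_scope.

(* Fix an optimal fair solution [Cs] and send every point to a center of [Cs]
   within distance r^*.  Two points with the same image are within 2r^*, so
   this map is injective on each Gamma_l (which is 2r^*-separated) together
   with the isolated vertices of the graph (points of different groups within
   2r^* are adjacent).  Hence |Gamma_l \cup isolated| <= |Cs| <= k, which gives
   the budget |Gamma_l| + |C| <= k after Phase 1, where C consists of isolated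
   vertices.  Every loop iteration adds
   one center and deletes an edge, i.e. a vertex of each Gamma_l, so the budget
   is invariant; fairness then follows from the budget and the failure of the
   return test. *)

Lemma leq_card_disjointU (T : finType) (A B D : {set T}) :
  [disjoint A & B] -> A :|: B \subset D -> (#|A| + #|B| <= #|D|)%N.
Proof.
move=> /disjoint_setI0 AB0 sABD.
by rewrite -cardsUI AB0 cards0 addn0 subset_leq_card.
Qed.

Lemma card_setI_ltn (T : finType) (V V' H : {set T}) x :
  V' \subset V :\ x -> x \in V -> x \in H -> (#|V' :&: H| < #|V :&: H|)%N.
Proof.
move=> /subsetD1P[sV'V xV'] xV xH; apply: proper_card; apply/properP.
by split; [exact: setSI | exists x; rewrite inE ?xV ?(negbTE xV')].
Qed.

Lemma card_partition (T : finType) (S1 S2 X : {set T}) :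
  S1 :&: S2 = set0 -> S1 :|: S2 = [set: T] ->
  #|X| = (#|X :&: S1| + #|X :&: S2|)%N.
Proof.
move=> /setP S12 /setP S1u.
have -> : S2 = ~: S1.
  apply/setP=> x; move: (S12 x) (S1u x); rewrite !inE.
  by case: (x \in S1); case: (x \in S2).
by rewrite -setDE cardsID.
Qed.

Section CoverMap.
Variables (R : realFieldType) (T : finType) (d : T -> T -> R).
Variables (Cs : {set T}) (r : R).
Hypothesis covCs : covers d Cs r.

Definition cover_map (x : T) : T := odflt x [pick c in Cs | d x c <= r].

Lemma cover_mapP x : cover_map x \in Cs /\ d x (cover_map x) <= r.
Proof.
rewrite /cover_map; case: pickP => [c /andP[] // | none].
by have [c cCs dxc] := covCs x; have := none c; rewrite cCs dxc.
Qed.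

Lemma cover_map_close (dsym : forall x y, d x y = d y x)
    (dtri : forall x y z, d x z <= d x y + d y z) x y :
  cover_map x = cover_map y -> d x y <= 2%:R * r.
Proof.
move=> fxy; have [_ dx] := cover_mapP x; have [_ dy] := cover_mapP y.
have e : d (cover_map x) y = d y (cover_map y) by rewrite fxy dsym.
have := dtri x (cover_map x) y; lra.
Qed.

Lemma leq_card_cover_map (A : {set T}) :
  {in A &, injective cover_map} -> (#|A| <= #|Cs|)%N.
Proof.
move=> inj; rewrite -(card_in_imset inj); apply: subset_leq_card.
by apply/subsetP => _ /imsetP[x _ ->]; case: (cover_mapP x).
Qed.

End CoverMap.

Section AlgorithmA.
Variables (R : realFieldType) (T : finType) (d : T -> T -> R).
Variables (G1 G2 : {set T}) (r : R).
Hypothesis dsym : forall x y, d x y = d y x.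

Local Notation adj := (adj d G1 G2 r).
Local Notation N1 := (N1 d G1 G2 r).
Local Notation step := (step d G1 G2 r).
Local Notation V0 := (V0 G1 G2).
Local Notation isolated0 := (isolated0 d G1 G2 r).
Local Notation phase1_C := (phase1_C d r).
Local Notation phase1_V := (phase1_V d G1 G2 r).

Lemma adj_sym V x y : adj V x y -> adj V y x.
Proof.
case/and4P=> xV yV groups dxy; apply/and4P; split; rewrite 1?dsym //.
by case/orP: groups => /andP[-> ->]; rewrite ?orbT.
Qed.

Lemma step_removes_edge C V C' V' :
  step C V C' V' -> exists a b, [/\ C' = a |: C, V' \subset V :\ a :\ b & adj V a b].
Proof.
case=> [p q _ pq | i [v vV /cards1P[j vj]] iV maxi].
  by exists p, q; split.
(* The degree-1 vertex v lies in N_1(j) for its neighbour j, so the maximiser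
   i has some degree-1 neighbour y. *)
have vj_adj : adj V v j by move: (set11 j); rewrite -vj inE.
have /card_gt0P[y yi] : (0 < #|N1 V i|)%N.
  apply: leq_trans (maxi j _); last by case/and4P: vj_adj.
  by apply/card_gt0P; exists v; rewrite !inE (adj_sym vj_adj) /deg vj cards1.
move: (yi); rewrite !inE => /andP[iy _].
exists i, y; split => //; apply/subsetP => x.
move=> /setDP[xV]; rewrite in_setU1 negb_or => /andP[xi xN1].
by rewrite !inE xi xV !andbT; apply: contraNneq xN1 => ->.
Qed.

Lemma card_removed_edge (V V' : {set T}) a b :
  adj V a b -> V' \subset V :\ a :\ b ->
  (#|V' :&: G1| < #|V :&: G1|)%N /\ (#|V' :&: G2| < #|V :&: G2|)%N.
Proof.
case/and4P=> aV bV groups _ sV'.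
have sa : V' \subset V :\ a by apply: subset_trans sV' (subsetDl _ _).
have sb : V' \subset V :\ b.
  by apply: subset_trans sV' _; apply/subsetP => x; rewrite !inE => /and3P[-> _ ->].
case/orP: groups => /andP[aG bG].
  by split; [exact: card_setI_ltn sa aV aG | exact: card_setI_ltn sb bV bG].
by split; [exact: card_setI_ltn sb bV bG | exact: card_setI_ltn sa aV aG].
Qed.

(* Conclusions (1) and (2) of the theorem, free of truncated subtraction. *)
Definition within_budget (k : nat) (C V : {set T}) : bool :=
  (#|V :&: G1| + #|C| <= k)%N && (#|V :&: G2| + #|C| <= k)%N.

Lemma step_within_budget k C V C' V' :
  step C V C' V' -> within_budget k C V -> within_budget k C' V'.
Proof.
case/step_removes_edge=> a [b [-> sV' ab]] /andP[b1 b2].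
have [lt1 lt2] := card_removed_edge ab sV'.
have cardC : (#|a |: C| <= #|C|.+1)%N by rewrite cardsU1 -add1n leq_add2r leq_b1.
by apply/andP; split; lia.
Qed.

Lemma fair_of_not_returns (S1 S2 : {set T}) k1 k2 C V :
  S1 :&: S2 = set0 -> S1 :|: S2 = [set: T] ->
  within_budget (k1 + k2) C V -> ~ returns G1 G2 S1 S2 k1 k2 C V ->
  fair_feasible S1 S2 k1 k2 C.
Proof.
move=> S12 S1u /andP[b1 b2] nret; have := card_partition C S12 S1u.
by split; rewrite leqNgt; apply/negP => lt; apply: nret; [right | left]; lia.
Qed.

Lemma phase1_fold_sub C s :
  foldl (fun C i => if far d r C i then i |: C else C) C s \subset C :|: [set x in s].
Proof.
elim: s C => [|y s IH] C /=; first exact: subsetUl.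
apply/subsetP => x /(subsetP (IH _)); rewrite !inE.
by case: ifP => _; rewrite ?inE; case: (x == y); case: (x \in C); case: (x \in s).
Qed.

Lemma phase1_C_sub_isolated s :
  perm_eq s (enum isolated0) -> phase1_C s \subset isolated0.
Proof.
move=> perm_s; apply: subset_trans (phase1_fold_sub set0 s) _.
rewrite set0U; apply/subsetP => x; rewrite in_set => xs.
by rewrite -mem_enum -(perm_mem perm_s).
Qed.

Lemma phase1_within_budget k s :
  perm_eq s (enum isolated0) ->
  (#|G1 :|: isolated0| <= k)%N -> (#|G2 :|: isolated0| <= k)%N ->
  within_budget k (phase1_C s) phase1_V.
Proof.
move=> /phase1_C_sub_isolated sC b1 b2.
have budget H : (#|phase1_V :&: H| + #|phase1_C s| <= #|H :|: isolated0|)%N.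
  apply: leq_card_disjointU.
    rewrite disjoints_subset; apply: subset_trans (subsetIl _ _) _.
    by rewrite /phase1_V setDE subIset // setCS sC orbT.
  rewrite subUset (subset_trans (subsetIr _ _) (subsetUl _ _)).
  exact: subset_trans sC (subsetUr _ _).
by rewrite /within_budget (leq_trans (budget G1) b1) (leq_trans (budget G2) b2).
Qed.

Lemma phase1_card_setI s (S H : {set T}) k :
  perm_eq s (enum isolated0) -> [disjoint S & H] ->
  (#|H :|: isolated0| <= k)%N -> (#|phase1_C s :&: S| + #|H| <= k)%N.
Proof.
move=> /phase1_C_sub_isolated sC SH bH; apply: leq_trans bH.
apply: leq_card_disjointU.
  exact: disjointWl (subsetIr _ _) SH.
rewrite setUC setUS //; apply: subset_trans sC; exact: subsetIl.
Qed.

Lemma adj_V0_not_isolated x y : adj V0 x y -> x \notin isolated0.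
Proof.
move=> xy; rewrite inE negb_and /deg -lt0n card_gt0; apply/orP; right.
by apply/set0Pn; exists y; rewrite inE.
Qed.

Variable Cs : {set T}.
Hypothesis covCs : covers d Cs r.
Hypothesis dge0 : forall x y, 0 <= d x y.
Hypothesis dtri : forall x y z, d x z <= d x y + d y z.
Hypothesis sep1 : {in G1 &, forall x y, x != y -> 2%:R * r < d x y}.
Hypothesis sep2 : {in G2 &, forall x y, x != y -> 2%:R * r < d x y}.

Local Notation f := (cover_map d Cs r).

Lemma cover_map_collision x y :
  x \in V0 -> y \in V0 -> x != y -> f x = f y -> adj V0 x y.
Proof.
move=> xV0 yV0 xy fxy; have dxy := cover_map_close covCs dsym dtri fxy.
have r0 : 0 <= r by have [_] := cover_mapP covCs x; apply: le_trans.
apply/and4P; split => //; last by lra.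
case/setUP: xV0 => xG; case/setUP: yV0 => yG; rewrite ?xG ?yG ?orbT //.
  by have := sep1 xG yG xy; lra.
by have := sep2 xG yG xy; lra.
Qed.

Lemma cover_map_inj (H : {set T}) :
  H \subset V0 -> {in H &, forall x y, x != y -> 2%:R * r < d x y} ->
  {in H :|: isolated0 &, injective f}.
Proof.
move=> HV0 sepH x y xHI yHI fxy; case: (eqVneq x y) => // xy; exfalso.
have inV0 z : z \in H :|: isolated0 -> z \in V0.
  by case/setUP => [/(subsetP HV0) // | ]; rewrite inE => /andP[].
have axy := cover_map_collision (inV0 _ xHI) (inV0 _ yHI) xy fxy.
have xH : x \in H by move: xHI; rewrite inE (negbTE (adj_V0_not_isolated axy)) orbF.
have yH : y \in H.
  by move: yHI; rewrite inE (negbTE (adj_V0_not_isolated (adj_sym axy))) orbF.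
by have := sepH x y xH yH xy; have := cover_map_close covCs dsym dtri fxy; lra.
Qed.

End AlgorithmA.

Theorem lemma4 (R : realFieldType) (T : finType) (d : T -> T -> R)
  (S1 S2 : {set T}) (k1 k2 : nat) (rstar : R) (G1 G2 : {set T}) :
  metric d ->
  S1 :&: S2 = set0 -> S1 :|: S2 = [set: T] ->
  optimal_radius d S1 S2 k1 k2 rstar ->
  indep_center_set d (2%:R * rstar) S1 G1 ->
  indep_center_set d (2%:R * rstar) S2 G2 ->
  (k1 < #|G1|)%N -> (k2 < #|G2|)%N ->
  forall s : seq T, perm_eq s (enum (isolated0 d G1 G2 rstar)) ->
  forall C V : {set T},
    reachable d G1 G2 rstar S1 S2 k1 k2
      (phase1_C d rstar s) (phase1_V d G1 G2 rstar) C V ->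
    [/\ (#|V :&: G1| <= (k1 + k2) - #|C|)%N /\ (#|V :&: G2| <= (k1 + k2) - #|C|)%N,
        (#|C| <= k1 + k2)%N &
        (#|C :&: S1| <= k1)%N /\ (#|C :&: S2| <= k2)%N].
Proof.
move=> [_ _ dsym dge0 dtri] S12 S1u [[Cs [Cs1 Cs2] covCs] _]
  [G1S1 sep1 _] [G2S2 sep2 _] ltG1 ltG2 s perm_s C V reach.
have cardCs : (#|Cs| <= k1 + k2)%N by rewrite (card_partition Cs S12 S1u) leq_add.
have bound (H : {set T}) : H \subset V0 G1 G2 ->
    {in H &, forall x y, x != y -> 2%:R * rstar < d x y} ->
    (#|H :|: isolated0 d G1 G2 rstar| <= k1 + k2)%N.
  move=> HV0 sepH; apply: leq_trans cardCs.
  exact: leq_card_cover_map (cover_map_inj dsym covCs dge0 dtri sep1 sep2 HV0 sepH).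
have bound1 := bound G1 (subsetUl _ _) sep1.
have bound2 := bound G2 (subsetUr _ _) sep2.
have dS1G2 : [disjoint S1 & G2] by rewrite -setI_eq0 -subset0 -S12 setISS.
have dS2G1 : [disjoint S2 & G1] by rewrite -setI_eq0 -subset0 -S12 setIC setISS.
suff [/andP[b1 b2] [f1 f2]] :
    within_budget G1 G2 (k1 + k2) C V /\ fair_feasible S1 S2 k1 k2 C.
  by split; [split | | split]; lia.
elim: reach => [|C' V' C'' V'' _ [budget _] _ st nret].
  have := phase1_card_setI perm_s dS1G2 bound2.
  have := phase1_card_setI perm_s dS2G1 bound1.
  by split; [exact: phase1_within_budget | split; lia].
have budget' := step_within_budget dsym st budget.
by split; last exact: fair_of_not_returns budget' nret.
Qed.
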